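(* Let $\mathbf m=(m_1,\ldots,m_p)\in\mathbb N^p$, $n\in\mathbb N$ and $|x|<1$. Then \[ 2n\int_0^x t^{2n-1}dt\,\frac{dt}{1-t^2}\Big(\frac{dt}{t}\Big)^{m_1-1}\frac{t\,dt}{1-t^2}\Big(\frac{dt}{t}\Big)^{m_2-1}\cdots\frac{t\,dt}{1-t^2}\Big(\frac{dt}{t}\Big)^{m_p-1} =(2n-1)\int_0^x t^{2n-2}dt\,\frac{t\,dt}{1-t^2}\Big(\frac{dt}{t}\Big)^{m_1-1}\frac{t\,dt}{1-t^2}\Big(\frac{dt}{t}\Big)^{m_2-1}\cdots\frac{t\,dt}{1-t^2}\Big(\frac{dt}{t}\Big)^{m_p-1} \] \[ =\sum_{j=1}^p(-1)^{j-1}t^\star_n(m_1,\ldots,m_{j-1})\,\mathrm{ti}_{m_p,\ldots,m_j}(x)+(-1)^p t^\star_n(\mathbf m;x). \]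
   Context: Iterated integrals: $\int_a^b f_q(t)dt\cdots f_1(t)dt:=\int_{a<t_q<\cdots<t_1<b}f_q(t_q)\cdots f_1(t_1)\,dt_1\cdots dt_q$, along the straight segment. For a composition $\mathbf k=(k_1,\ldots,k_r)$: $t^\star_n(\mathbf k)=\sum_{n\ge n_1\ge\cdots\ge n_r\ge1}\prod_i(2n_i-1)^{-k_i}$ (with $t^\star_n(\emptyset)=1$), $t^\star_n(\mathbf k;x)=\sum_{n\ge n_1\ge\cdots\ge n_r\ge1}x^{2n_r-1}\prod_i(2n_i-1)^{-k_i}$, and the multiple $t$-polylogarithm $\mathrm{ti}_{\mathbf k}(x)=\sum_{n_1>\cdots>n_r>0}x^{2n_1-1}\prod_i(2n_i-1)^{-k_i}$. *)

From Stdlib Require Import Reals Lra Lia List.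
From Coquelicot Require Import Coquelicot.
Import ListNotations.
Open Scope R_scope.

(* Iterated integral along the straight segment from 0 to x.
   [itint_aux [f_1; ...; f_q] x] = int_0^x f_1(t1) (int_0^t1 f_2(t2) (... ) dt2) dt1,
   i.e. the head of the list is the OUTERMOST form (closest to x). *)
Fixpoint itint_aux (fs : list (R -> R)) (x : R) : R :=
  match fs with
  | nil => 1
  | f :: fs' => RInt (fun t => f t * itint_aux fs' t) 0 x
  end.

(* Paper's notation: int_0^x f_q(t)dt ... f_1(t)dt, written left to right as the
   word [f_q; ...; f_1]; leftmost form is innermost (t_q closest to 0). *)
Definition itint (w : list (R -> R)) (x : R) : R := itint_aux (rev w) x.

Definition om_t (t : R) : R := / t.
Definition om_1 (t : R) : R := / (1 - t ^ 2).
Definition om_tt (t : R) : R := t / (1 - t ^ 2).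

Definition block (m : nat) : list (R -> R) := om_tt :: repeat om_t (m - 1).

Definition oddinv (j k : nat) : R := / (INR (2 * j - 1)) ^ k.

(* t^star_n(k_1,...,k_r) = sum_{n >= n_1 >= ... >= n_r >= 1} prod (2n_i-1)^{-k_i} *)
Fixpoint tstar (n : nat) (ks : list nat) : R :=
  match ks with
  | nil => 1
  | k :: ks' => sum_n_m (fun j => oddinv j k * tstar j ks') 1 n
  end.

(* t^star_n(k_1,...,k_r; x) = sum_{n>=n_1>=...>=n_r>=1} x^{2n_r-1} prod (2n_i-1)^{-k_i}
   (only used for r >= 1; the value for the empty list is irrelevant) *)
Fixpoint tstarx (n : nat) (ks : list nat) (x : R) : R :=
  match ks with
  | nil => 1
  | k :: ks' =>
      sum_n_m (fun j => oddinv j k *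
                        match ks' with
                        | nil => x ^ (2 * j - 1)
                        | _ => tstarx j ks' x
                        end) 1 n
  end.

(* strict finite sums t_M(k_1,...,k_r) = sum_{M >= n_1 > ... > n_r >= 1} prod (2n_i-1)^{-k_i} *)
Fixpoint tstrict (M : nat) (ks : list nat) : R :=
  match ks with
  | nil => 1
  | k :: ks' => sum_n_m (fun j => oddinv j k * tstrict (j - 1) ks') 1 M
  end.

(* multiple t-polylogarithm
   ti_{k_1,...,k_r}(x) = sum_{n_1 > ... > n_r > 0} x^{2n_1-1} prod (2n_i-1)^{-k_i} *)
Definition ti (ks : list nat) (x : R) : R :=
  match ks with
  | nil => 1
  | k :: ks' =>
      Series (fun N => match N with
                       | O => 0
                       | S _ => x ^ (2 * N - 1) * oddinv N k * tstrict (N - 1) ks'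
                       end)
  end.

From Stdlib Require Import Reals List Lra Lia.
From Coquelicot Require Import Coquelicot.
Import ListNotations.
Open Scope R_scope.

(* Every quantity is an odd power series  oddser c x = sum_{N >= 1} c_N x^{2N-1}
   whose coefficients c have subexponential growth (radius >= 1).  On such
   series the forms act as explicit operators on coefficients:
     int_0^x t dt/(1-t^2) oddser c = oddser (N |-> (2N-1)^{-1} (c_1 + ... + c_{N-1})),
     int_0^x dt/t oddser c        = oddser (N |-> (2N-1)^{-1} c_N)     (if c_1 = 0),
   so a block  t dt/(1-t^2) (dt/t)^(m-1)  acts by
     blockop m c N = (2N-1)^{-m} (c_1 + ... + c_{N-1}).
   The innermost forms (2n-1) t^{2n-2} dt and 2n t^{2n-1} dt dt/(1-t^2) both
   start a chain of blocks from the Kronecker delta at n, which gives the first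
   equality: both sides equal oddser (blockops m (delta n)).  For the second,
   an induction on the word (adding one block at the outer end, i.e. partial
   summation) computes blockops m (delta n) in closed form; its odd series is
   recognised term by term as the alternating sum of t^star_n * ti plus the
   tail (-1)^p t^star_n(m; x). *)

Lemma INR_odd N : (1 <= N)%nat -> INR (2 * N - 1) = 2 * INR N - 1.
Proof. intros HN. rewrite minus_INR, mult_INR by lia. simpl. lra. Qed.

Lemma INR_odd_ge1 N : (1 <= N)%nat -> 1 <= INR (2 * N - 1).
Proof. intros HN. rewrite INR_odd by exact HN. apply le_INR in HN. simpl in HN. lra. Qed.

Lemma oddinv_le1 j k : Rabs (oddinv j k) <= 1.
Proof.
  unfold oddinv. destruct j as [|j].
  - destruct k as [|k]; simpl.
    + rewrite Rinv_1, Rabs_R1. lra.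
    + rewrite Rmult_0_l, Rinv_0, Rabs_R0. lra.
  - assert (H1 := INR_odd_ge1 (S j) ltac:(lia)).
    assert (Hk : 1 <= INR (2 * S j - 1) ^ k) by (apply pow_R1_Rle; exact H1).
    rewrite Rabs_pos_eq.
    + rewrite <- Rinv_1. apply Rinv_le_contravar; lra.
    + left. apply Rinv_0_lt_compat. lra.
Qed.

(* [oddinv N 1] is the inverse of 2N-1; it undoes the factor produced by
   differentiating x^{2N-1}. *)
Lemma oddinv1_mul N : (1 <= N)%nat -> INR (2 * N - 1) * oddinv N 1 = 1.
Proof.
  intros HN. unfold oddinv. rewrite pow_1. apply Rinv_r.
  assert (H1 := INR_odd_ge1 N HN). lra.
Qed.

Lemma oddinv_pow N m : (1 <= m)%nat -> oddinv N 1 ^ (m - 1) * oddinv N 1 = oddinv N m.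
Proof.
  intros Hm. destruct m as [|m]; [lia|]. replace (S m - 1)%nat with m by lia.
  unfold oddinv. rewrite pow_1, pow_inv, <- Rinv_mult. simpl. f_equal. ring.
Qed.

Lemma sum_1_0 (f : nat -> R) : sum_n_m f 1 0 = 0.
Proof. apply (sum_n_m_zero (G := R_AbelianMonoid)). lia. Qed.

Lemma sum_1_S (f : nat -> R) b : sum_n_m f 1 (S b) = sum_n_m f 1 b + f (S b).
Proof. apply (sum_n_Sm (G := R_AbelianMonoid)). lia. Qed.

(** * Sequences of subexponential growth *)

(* [c] has subexponential growth: [c N r^N] is bounded for every [0 < r < 1],
   i.e. the power series with coefficients [c] has radius at least 1. *)
Definition subexp (c : nat -> R) : Prop :=
  forall r, 0 < r < 1 -> exists M, forall N, Rabs (c N) * r ^ N <= M.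

Lemma pow_le1 s k : 0 <= s <= 1 -> s ^ k <= 1.
Proof. intros Hs. rewrite <- (pow1 k). apply pow_incr. exact Hs. Qed.

Lemma pow_antimono s k N : 0 <= s <= 1 -> (k <= N)%nat -> s ^ N <= s ^ k.
Proof.
  intros Hs HkN. replace N with (k + (N - k))%nat by lia. rewrite pow_add.
  assert (0 <= s ^ k) by (apply pow_le; lra).
  assert (s ^ (N - k) <= 1) by (apply pow_le1; lra).
  assert (0 <= s ^ (N - k)) by (apply pow_le; lra). nra.
Qed.

Lemma subexp_ext1 c d : (forall N, (1 <= N)%nat -> c N = d N) -> subexp c -> subexp d.
Proof.
  intros E Gc r Hr. destruct (Gc r Hr) as [M HM].
  exists (Rmax M (Rabs (d 0%nat))). intros [|N].
  - simpl. rewrite Rmult_1_r. apply Rmax_r.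
  - rewrite <- E by lia. eapply Rle_trans; [apply HM | apply Rmax_l].
Qed.

Lemma subexp_bounded c : (forall N, Rabs (c N) <= 1) -> subexp c.
Proof.
  intros Hc r Hr. exists 1. intros N. specialize (Hc N).
  assert (0 <= r ^ N) by (apply pow_le; lra).
  assert (r ^ N <= 1) by (apply pow_le1; lra).
  pose proof (Rabs_pos (c N)). nra.
Qed.

Lemma subexp_zero : subexp (fun _ => 0).
Proof. apply subexp_bounded. intros N. rewrite Rabs_R0. lra. Qed.

Lemma subexp_plus c d : subexp c -> subexp d -> subexp (fun N => c N + d N).
Proof.
  intros Gc Gd r Hr. destruct (Gc r Hr) as [M1 H1], (Gd r Hr) as [M2 H2].
  exists (M1 + M2). intros N. specialize (H1 N). specialize (H2 N).
  assert (0 <= r ^ N) by (apply pow_le; lra).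
  eapply Rle_trans; [apply Rmult_le_compat_r; [exact H | apply Rabs_triang] | lra].
Qed.

Lemma subexp_scal a c : subexp c -> subexp (fun N => a * c N).
Proof.
  intros Gc r Hr. destruct (Gc r Hr) as [M HM]. exists (Rabs a * M). intros N.
  rewrite Rabs_mult, Rmult_assoc. apply Rmult_le_compat_l; [apply Rabs_pos | apply HM].
Qed.

Lemma subexp_mul_bounded e c :
  (forall N, Rabs (e N) <= 1) -> subexp c -> subexp (fun N => e N * c N).
Proof.
  intros He Gc r Hr. destruct (Gc r Hr) as [M HM]. exists M. intros N.
  specialize (HM N). specialize (He N).
  assert (0 <= r ^ N) by (apply pow_le; lra).
  pose proof (Rabs_pos (e N)). pose proof (Rabs_pos (c N)).
  rewrite Rabs_mult. eapply Rle_trans; [|exact HM]. apply Rmult_le_compat_r; nra.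
Qed.

Lemma subexp_sum (f : nat -> nat -> R) b :
  (forall j, subexp (f j)) -> subexp (fun N => sum_n_m (fun j => f j N) 1 b).
Proof.
  intros Gf. induction b as [|b IH].
  - eapply subexp_ext1; [|apply subexp_zero]. intros N _. rewrite sum_1_0. reflexivity.
  - eapply subexp_ext1; [|apply (subexp_plus _ _ IH (Gf (S b)))].
    intros N _. rewrite sum_1_S. reflexivity.
Qed.

(* Bernoulli's inequality gives [N q^N <= K] for [0 < q < 1]. *)
Lemma nat_geometric_bounded q : 0 < q < 1 -> exists K, forall N, INR N * q ^ N <= K.
Proof.
  intros Hq. set (h := / q - 1).
  assert (Hh : 0 < h).
  { unfold h. assert (1 < / q) by (rewrite <- Rinv_1; apply Rinv_lt_contravar; lra). lra. }
  assert (Bernoulli : forall N, 1 + INR N * h <= (/ q) ^ N).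
  { induction N as [|N IH]; [simpl; lra|].
    rewrite S_INR. simpl. replace (/ q) with (1 + h) in * by (unfold h; ring).
    pose proof (pos_INR N). nra. }
  exists (/ h). intros N. specialize (Bernoulli N). rewrite pow_inv in Bernoulli.
  assert (Hp : 0 < q ^ N) by (apply pow_lt; lra).
  assert (INR N * h * q ^ N <= 1).
  { apply Rmult_le_compat_r with (r := q ^ N) in Bernoulli; [|lra].
    rewrite Rinv_l in Bernoulli; lra. }
  apply (Rmult_le_reg_r h); [lra|]. rewrite Rinv_l by lra. nra.
Qed.

Definition psum (c : nat -> R) (N : nat) : R := sum_n_m c 1 (N - 1).

Lemma sum_n_m_le_loc (a b : nat -> R) n m :
  (forall k, (n <= k <= m)%nat -> a k <= b k) -> sum_n_m a n m <= sum_n_m b n m.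
Proof.
  intros H. rewrite (sum_n_m_ext_loc a (fun k => Rmin (a k) (b k))).
  - apply sum_n_m_le. intros k. apply Rmin_r.
  - intros k Hk. rewrite Rmin_left; auto.
Qed.

(* Partial sums preserve subexponential growth: bound each |c_k| s^k with
   s = sqrt r, so that |psum c N| r^N <= M N s^N. *)
Lemma subexp_psum c : subexp c -> subexp (psum c).
Proof.
  intros Gc r Hr. set (s := sqrt r).
  assert (Hs : 0 < s < 1).
  { unfold s. split; [apply sqrt_lt_R0; lra|]. rewrite <- sqrt_1. apply sqrt_lt_1; lra. }
  assert (Hss : r = s * s) by (unfold s; symmetry; apply sqrt_sqrt; lra).
  destruct (Gc s Hs) as [M HM]. destruct (nat_geometric_bounded s Hs) as [K HK].
  assert (HM0 : 0 <= M).
  { specialize (HM 0%nat). simpl in HM. pose proof (Rabs_pos (c 0%nat)). lra. }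
  exists (M * K). intros N. unfold psum.
  assert (Hrp : 0 <= r ^ N) by (apply pow_le; lra).
  assert (Hsp : 0 <= s ^ N) by (apply pow_le; lra).
  assert (Hterm : forall k, (1 <= k <= N - 1)%nat -> Rabs (c k) * r ^ N <= M * s ^ N).
  { intros k Hk. rewrite Hss, Rpow_mult_distr.
    assert (s ^ N <= s ^ k) by (apply pow_antimono; lra || lia).
    specialize (HM k). pose proof (Rabs_pos (c k)).
    assert (0 <= s ^ k) by (apply pow_le; lra).
    apply Rle_trans with (Rabs (c k) * s ^ k * s ^ N); [|apply Rmult_le_compat_r; lra].
    rewrite Rmult_assoc. apply Rmult_le_compat_l; [lra|]. apply Rmult_le_compat_r; lra. }
  apply Rle_trans with (sum_n_m (fun k => Rabs (c k)) 1 (N - 1) * r ^ N).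
  { apply Rmult_le_compat_r; [exact Hrp | apply (norm_sum_n_m c 1 (N - 1))]. }
  rewrite <- (sum_n_m_mult_r (K := R_Ring)).
  apply Rle_trans with (sum_n_m (fun _ => M * s ^ N) 1 (N - 1)).
  { apply sum_n_m_le_loc. exact Hterm. }
  rewrite sum_n_m_const. specialize (HK N).
  apply Rle_trans with (INR N * (M * s ^ N)); [|nra].
  apply Rmult_le_compat_r; [nra|]. apply le_INR. lia.
Qed.

(** * Odd power series *)

(* Index shift: the coefficient of y^k in the series in y = x^2 is c_{k+1}. *)
Definition shift (c : nat -> R) (k : nat) : R := c (S k).

(* [oddser c x = sum_{N >= 1} c_N x^{2N-1}]; the coefficient [c 0] is ignored. *)
Definition oddser (c : nat -> R) (x : R) : R := x * PSeries (shift c) (x ^ 2).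

Lemma radius_subexp a y : subexp a -> Rabs y < 1 -> Rbar_lt (Rabs y) (CV_radius a).
Proof.
  intros Ga Hy. set (r := (Rabs y + 1) / 2).
  assert (Hr : 0 < r < 1) by (pose proof (Rabs_pos y); unfold r; lra).
  destruct (Ga r Hr) as [M HM].
  assert (Hle : Rbar_le r (CV_radius a)).
  { apply (proj1 (CV_radius_bounded a)). exists M. intros N.
    rewrite Rabs_mult, (Rabs_pos_eq (r ^ N)) by (apply pow_le; lra). apply HM. }
  destruct (CV_radius a); simpl in *; auto. unfold r in Hle. lra.
Qed.

Lemma subexp_shift c : subexp c -> subexp (shift c).
Proof.
  intros Gc r Hr. destruct (Gc r Hr) as [M HM]. exists (M / r). intros k.
  specialize (HM (S k)). simpl in HM. unfold shift.
  apply (Rmult_le_reg_r r); [lra|]. replace (M / r * r) with M by (field; lra).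
  rewrite Rmult_assoc, (Rmult_comm (r ^ k) r). exact HM.
Qed.

Lemma radius_shift c y : subexp c -> Rabs y < 1 -> Rbar_lt (Rabs y) (CV_radius (shift c)).
Proof. intros Gc Hy. apply radius_subexp; [apply subexp_shift|]; assumption. Qed.

Lemma Rabs_sqr_lt1 x : Rabs x < 1 -> Rabs (x ^ 2) < 1.
Proof. intros H. rewrite <- RPow_abs. pose proof (Rabs_pos x). simpl. nra. Qed.

Lemma one_minus_sqr_neq0 x : Rabs x < 1 -> 1 - x ^ 2 <> 0.
Proof.
  intros H. assert (H2 := Rabs_sqr_lt1 x H).
  rewrite Rabs_pos_eq in H2 by apply pow2_ge_0. lra.
Qed.

Lemma ex_pseries_shift c x : subexp c -> Rabs x < 1 -> ex_pseries (shift c) (x ^ 2).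
Proof.
  intros Gc Hx. apply CV_radius_inside. apply radius_shift; [|apply Rabs_sqr_lt1]; assumption.
Qed.

Lemma Rabs_between_lt1 y x : Rabs y < 1 -> Rmin 0 y <= x <= Rmax 0 y -> Rabs x < 1.
Proof.
  intros Hy Hx. unfold Rmin, Rmax in Hx.
  destruct (Rle_dec 0 y); apply Rabs_def1; apply Rabs_def2 in Hy; lra.
Qed.

Lemma oddser_ext c d x : (forall N, (1 <= N)%nat -> c N = d N) -> oddser c x = oddser d x.
Proof.
  intros E. unfold oddser. f_equal. apply PSeries_ext. intros k. apply E. lia.
Qed.

Lemma oddser_scal a c x : oddser (fun N => a * c N) x = a * oddser c x.
Proof.
  unfold oddser. rewrite (PSeries_ext _ (PS_scal a (shift c))) by reflexivity.
  rewrite PSeries_scal. ring.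
Qed.

Lemma oddser_zero x : oddser (fun _ => 0) x = 0.
Proof.
  unfold oddser. rewrite (PSeries_ext _ (fun _ => 0)) by reflexivity.
  rewrite PSeries_const_0. ring.
Qed.

Lemma oddser_plus c d x : subexp c -> subexp d -> Rabs x < 1 ->
  oddser (fun N => c N + d N) x = oddser c x + oddser d x.
Proof.
  intros Gc Gd Hx. unfold oddser. rewrite <- Rmult_plus_distr_l. f_equal.
  rewrite <- PSeries_plus by (apply ex_pseries_shift; assumption).
  apply PSeries_ext. reflexivity.
Qed.

Lemma oddser_sum (f : nat -> nat -> R) b x : (forall j, subexp (f j)) -> Rabs x < 1 ->
  oddser (fun N => sum_n_m (fun j => f j N) 1 b) x = sum_n_m (fun j => oddser (f j) x) 1 b.
Proof.
  intros Gf Hx. induction b as [|b IH].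
  - rewrite sum_1_0, <- (oddser_zero x). apply oddser_ext. intros N _. apply sum_1_0.
  - rewrite sum_1_S, <- IH, <- oddser_plus by (try apply subexp_sum; auto).
    apply oddser_ext. intros N _. apply sum_1_S.
Qed.

(* [a(y) + 2y a'(y) = sum_k (2k+1) a_k y^k], the derivative of [x a(x^2)]
   written in the variable [y = x^2]. *)
Lemma PSeries_odd_derive a y : Rbar_lt (Rabs y) (CV_radius a) ->
  PSeries a y + 2 * y * PSeries (PS_derive a) y = PSeries (fun k => (2 * INR k + 1) * a k) y.
Proof.
  intros Hr.
  assert (Ha := PSeries_correct a y (CV_radius_inside a y Hr)).
  assert (Hr' : Rbar_lt (Rabs y) (CV_radius (PS_derive a))) by (rewrite CV_radius_derive; exact Hr).
  assert (Hd := PSeries_correct _ y (CV_radius_inside _ y Hr')).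
  assert (Hsum := is_pseries_plus _ _ _ _ _ Ha
                    (is_pseries_scal 2 _ _ _ (Rmult_comm _ _) (is_pseries_incr_1 _ _ _ Hd))).
  assert (Hcombo : is_pseries (fun k => (2 * INR k + 1) * a k) y
     (plus (PSeries a y) (scal 2 (scal y (PSeries (PS_derive a) y))))).
  { eapply is_pseries_ext; [|exact Hsum].
    intros [|k]; unfold PS_plus, PS_scal, PS_incr_1, PS_derive; simpl;
      unfold plus, scal, zero; simpl; unfold mult; simpl; ring. }
  apply is_pseries_unique in Hcombo. rewrite Hcombo. simpl.
  unfold plus, scal; simpl. unfold mult; simpl. ring.
Qed.

Lemma oddser_derive d w x : subexp d ->
  (forall N, (1 <= N)%nat -> w N = INR (2 * N - 1) * d N) -> Rabs x < 1 ->
  is_derive (oddser d) x (PSeries (shift w) (x ^ 2)).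
Proof.
  intros Gd Ew Hx.
  assert (Hr := radius_shift d (x ^ 2) Gd (Rabs_sqr_lt1 x Hx)).
  assert (Hsq : is_derive (fun t : R => t ^ 2) x (2 * x)) by (auto_derive; [auto | ring]).
  assert (Hm := is_derive_mult (fun t : R => t) _ x _ _ (is_derive_id x)
                  (is_derive_comp _ _ _ _ _ (is_derive_PSeries _ _ Hr) Hsq) Rmult_comm).
  unfold oddser.
  replace (PSeries (shift w) (x ^ 2)) with
    (plus (mult one (PSeries (shift d) (x ^ 2)))
          (mult x (scal (2 * x) (PSeries (PS_derive (shift d)) (x ^ 2))))); [exact Hm|].
  transitivity (PSeries (shift d) (x ^ 2) + 2 * (x ^ 2) * PSeries (PS_derive (shift d)) (x ^ 2)).
  { simpl. unfold plus, scal, one; simpl. unfold mult; simpl. ring. }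
  rewrite PSeries_odd_derive by exact Hr. apply PSeries_ext. intros k. unfold shift.
  rewrite Ew, INR_odd, S_INR by lia. ring.
Qed.

Lemma RInt_oddser d w g y : subexp d -> subexp w ->
  (forall N, (1 <= N)%nat -> w N = INR (2 * N - 1) * d N) ->
  (forall x, Rabs x < 1 -> g x = PSeries (shift w) (x ^ 2)) -> Rabs y < 1 ->
  RInt g 0 y = oddser d y.
Proof.
  intros Gd Gw Ew Eg Hy.
  rewrite (RInt_ext g (fun x => PSeries (shift w) (x ^ 2))).
  2:{ intros x Hx. apply Eg, (Rabs_between_lt1 y); [assumption | lra]. }
  apply is_RInt_unique.
  replace (oddser d y) with (minus (oddser d y) (oddser d 0))
    by (unfold oddser, minus, plus, opp; simpl; ring).
  apply (is_RInt_derive (oddser d)).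
  - intros x Hx. apply oddser_derive; try assumption. apply (Rabs_between_lt1 y); assumption.
  - intros x Hx. assert (Hx1 := Rabs_between_lt1 y x Hy Hx).
    apply continuity_pt_filterlim.
    apply (continuity_pt_comp (fun t => t ^ 2) (PSeries (shift w)) x).
    + apply derivable_continuous_pt, derivable_pt_pow.
    + apply PSeries_continuity, radius_shift; [|apply Rabs_sqr_lt1]; assumption.
Qed.

Lemma PSeries_psum c y : subexp c -> Rabs y < 1 ->
  (1 - y) * PSeries (shift (psum c)) y = y * PSeries (shift c) y.
Proof.
  intros Gc Hy.
  assert (Hp := PSeries_correct _ y
                  (CV_radius_inside _ y (radius_shift (psum c) y (subexp_psum c Gc) Hy))).
  assert (Hq := PSeries_correct _ y (CV_radius_inside _ y (radius_shift c y Gc Hy))).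
  assert (Hdiff := is_pseries_plus _ _ _ _ _ Hp
                     (is_pseries_scal (-1) _ _ _ (Rmult_comm _ _) (is_pseries_incr_1 _ _ _ Hp))).
  assert (Hshift : is_pseries (PS_incr_1 (shift c)) y
      (plus (PSeries (shift (psum c)) y) (scal (-1) (scal y (PSeries (shift (psum c)) y))))).
  { eapply is_pseries_ext; [|exact Hdiff].
    intros [|k]; unfold PS_plus, PS_scal, PS_incr_1, shift, psum; simpl;
      unfold plus, scal, zero; simpl; unfold mult; simpl.
    - rewrite sum_1_0. ring.
    - rewrite Nat.sub_0_r, sum_1_S. ring. }
  apply is_pseries_unique in Hshift.
  rewrite (is_pseries_unique _ _ _ (is_pseries_incr_1 _ _ _ Hq)) in Hshift.
  revert Hshift. simpl. unfold plus, scal; simpl. unfold mult; simpl. intros ->. ring.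
Qed.

Lemma RInt_om_tt c y : subexp c -> Rabs y < 1 ->
  RInt (fun t => om_tt t * oddser c t) 0 y = oddser (fun N => oddinv N 1 * psum c N) y.
Proof.
  intros Gc Hy. apply (RInt_oddser _ (psum c)); try assumption.
  - apply subexp_mul_bounded; [intros N; apply oddinv_le1 | apply subexp_psum; assumption].
  - apply subexp_psum. assumption.
  - intros N HN. rewrite <- Rmult_assoc, oddinv1_mul by exact HN. ring.
  - intros x Hx. unfold om_tt, oddser.
    assert (Hx2 := one_minus_sqr_neq0 x Hx).
    apply (Rmult_eq_reg_l (1 - x ^ 2)); [|exact Hx2].
    rewrite (PSeries_psum c (x ^ 2) Gc (Rabs_sqr_lt1 x Hx)). field. exact Hx2.
Qed.

(* Integration against [dt/t] maps the coefficients [c] to [N |-> c_N/(2N-1)],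
   provided [c_1 = 0] so that the integrand has no pole at 0. *)
Lemma RInt_om_t c y : subexp c -> c 1%nat = 0 -> Rabs y < 1 ->
  RInt (fun t => om_t t * oddser c t) 0 y = oddser (fun N => oddinv N 1 * c N) y.
Proof.
  intros Gc Hc1 Hy. apply (RInt_oddser _ c); try assumption.
  - apply subexp_mul_bounded; [intros N; apply oddinv_le1 | assumption].
  - intros N HN. rewrite <- Rmult_assoc, oddinv1_mul by exact HN. ring.
  - intros x Hx. unfold om_t, oddser. destruct (Req_dec x 0) as [->|Hx0].
    + replace (0 ^ 2) with 0 by ring. rewrite PSeries_0. unfold shift. rewrite Hc1. ring.
    + field. exact Hx0.
Qed.

(** * Iterated integrals of blocks act on coefficients *)

(* [itint_with fs g x] is [itint_aux fs x] with innermost integrand [g]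
   instead of the constant 1; it lets a word be integrated piece by piece. *)
Fixpoint itint_with (fs : list (R -> R)) (g : R -> R) (x : R) : R :=
  match fs with
  | nil => g x
  | f :: fs' => RInt (fun t => f t * itint_with fs' g t) 0 x
  end.

Lemma itint_aux_with fs x : itint_aux fs x = itint_with fs (fun _ => 1) x.
Proof.
  revert x; induction fs as [|f fs IH]; intros x; simpl; [reflexivity|].
  apply RInt_ext. intros t _. rewrite IH. reflexivity.
Qed.

Lemma itint_with_app l1 l2 g x : itint_with (l1 ++ l2) g x = itint_with l1 (itint_with l2 g) x.
Proof.
  revert x; induction l1 as [|f l1 IH]; intros x; simpl; [reflexivity|].
  apply RInt_ext. intros t _. rewrite IH. reflexivity.
Qed.

Lemma itint_with_ext fs g h x : (forall y, Rabs y < 1 -> g y = h y) -> Rabs x < 1 ->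
  itint_with fs g x = itint_with fs h x.
Proof.
  intros E. revert x; induction fs as [|f fs IH]; intros x Hx; simpl; [auto|].
  apply RInt_ext. intros t Ht. rewrite IH; [reflexivity|].
  apply (Rabs_between_lt1 x); [assumption | lra].
Qed.

Lemma itint_om_t c j x : subexp c -> c 1%nat = 0 -> Rabs x < 1 ->
  itint_with (repeat om_t j) (oddser c) x = oddser (fun N => oddinv N 1 ^ j * c N) x.
Proof.
  revert x. induction j as [|j IH]; intros x Gc Hc Hx; simpl.
  - apply oddser_ext. intros N _. ring.
  - rewrite (RInt_ext _ (fun t => om_t t * oddser (fun N => oddinv N 1 ^ j * c N) t)).
    + rewrite RInt_om_t; try assumption.
      * apply oddser_ext. intros N _. ring.
      * apply subexp_mul_bounded; [|assumption]. intros N.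
        rewrite <- RPow_abs. apply pow_le1. split; [apply Rabs_pos | apply oddinv_le1].
      * rewrite Hc. ring.
    + intros t Ht. rewrite IH; try assumption. reflexivity.
      apply (Rabs_between_lt1 x); [assumption | lra].
Qed.

Definition blockop (m : nat) (c : nat -> R) (N : nat) : R := oddinv N m * psum c N.

Lemma subexp_blockop m c : subexp c -> subexp (blockop m c).
Proof.
  intros Gc. apply subexp_mul_bounded; [intros N; apply oddinv_le1 | apply subexp_psum, Gc].
Qed.

(* The [(dt/t)^(m-1)] part of a block, applied after its [t dt/(1-t^2)] part
   has produced [h]. *)
Lemma itint_block_tail m c h x : (1 <= m)%nat -> subexp c ->
  (forall y, Rabs y < 1 -> h y = oddser (fun N => oddinv N 1 * psum c N) y) -> Rabs x < 1 ->
  itint_with (repeat om_t (m - 1)) h x = oddser (blockop m c) x.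
Proof.
  intros Hm Gc Eh Hx. rewrite (itint_with_ext _ _ _ _ Eh Hx), itint_om_t; try assumption.
  - apply oddser_ext. intros N _. unfold blockop. rewrite <- Rmult_assoc, oddinv_pow by exact Hm.
    reflexivity.
  - apply subexp_mul_bounded; [intros N; apply oddinv_le1 | apply subexp_psum, Gc].
  - unfold psum. simpl. rewrite sum_1_0. ring.
Qed.

Lemma itint_block m c x : (1 <= m)%nat -> subexp c -> Rabs x < 1 ->
  itint_with (rev (block m)) (oddser c) x = oddser (blockop m c) x.
Proof.
  intros Hm Gc Hx. unfold block. cbn [rev]. rewrite rev_repeat, itint_with_app.
  apply itint_block_tail; try assumption. intros y Hy. apply RInt_om_tt; assumption.
Qed.

(* The composite of the block operators of [ms], first block innermost. *)
Fixpoint blockops (ms : list nat) (c : nat -> R) : nat -> R :=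
  match ms with
  | nil => c
  | m :: ms' => blockops ms' (blockop m c)
  end.

Lemma itint_blocks ms c x : List.Forall (fun k => (1 <= k)%nat) ms -> subexp c -> Rabs x < 1 ->
  itint_with (rev (flat_map block ms)) (oddser c) x = oddser (blockops ms c) x.
Proof.
  revert c x. induction ms as [|m ms IH]; intros c x Hms Gc Hx; [reflexivity|].
  inversion Hms as [|? ? Hm Hms']; subst.
  cbn [flat_map]. rewrite rev_app_distr, itint_with_app.
  rewrite (itint_with_ext _ _ (oddser (blockop m c))); try assumption.
  - apply IH; [assumption | apply subexp_blockop, Gc | assumption].
  - intros y Hy. apply itint_block; assumption.
Qed.

(** * The block operators applied to a Kronecker delta *)

Lemma psum_ext1 c d N : (forall i, (1 <= i)%nat -> c i = d i) -> psum c N = psum d N.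
Proof. intros E. apply sum_n_m_ext_loc. intros k Hk. apply E. lia. Qed.

Lemma psum_scal a c N : psum (fun i => a * c i) N = a * psum c N.
Proof. apply (sum_n_m_mult_l (K := R_Ring)). Qed.

Lemma psum_plus c d N : psum (fun i => c i + d i) N = psum c N + psum d N.
Proof. apply (sum_n_m_plus (G := R_AbelianMonoid)). Qed.

Lemma psum_sum (f : nat -> nat -> R) b N :
  psum (fun i => sum_n_m (fun j => f j i) 1 b) N = sum_n_m (fun j => psum (f j) N) 1 b.
Proof.
  induction b as [|b IH].
  - rewrite sum_1_0. unfold psum. rewrite (sum_n_m_ext _ (fun _ => 0)).
    + apply (sum_n_m_const_zero (G := R_AbelianMonoid)).
    + intros i. apply sum_1_0.
  - rewrite sum_1_S, <- IH, <- psum_plus. apply sum_n_m_ext. intros i. apply sum_1_S.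
Qed.

Lemma blockops_ext1 ms c d : (forall i, (1 <= i)%nat -> c i = d i) ->
  forall N, (1 <= N)%nat -> blockops ms c N = blockops ms d N.
Proof.
  revert c d. induction ms as [|m ms IH]; intros c d E N HN; simpl; [auto|].
  apply IH; [|assumption]. intros i _. unfold blockop. f_equal. apply psum_ext1, E.
Qed.

Lemma blockops_snoc L m c : blockops (L ++ [m]) c = blockop m (blockops L c).
Proof. revert c; induction L as [|k L IH]; intros c; simpl; [reflexivity | apply IH]. Qed.

Lemma blockops_scal ms c a N : (1 <= N)%nat ->
  blockops ms (fun i => a * c i) N = a * blockops ms c N.
Proof.
  intros HN. revert c. induction ms as [|m ms IH]; intros c; simpl; [reflexivity|].
  rewrite <- IH. apply blockops_ext1; [|assumption].
  intros i _. unfold blockop. rewrite psum_scal. ring.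
Qed.

(* Kronecker delta: [oddser (delta n) x = x^{2n-1}]. *)
Definition delta (n N : nat) : R := if Nat.eqb N n then 1 else 0.

(* Coefficient of [x^{2N-1}] in [ti ks x]. *)
Definition ti_coef (ks : list nat) (N : nat) : R :=
  match ks with
  | nil => 0
  | k :: ks' => oddinv N k * tstrict (N - 1) ks'
  end.

(* Coefficient of [x^{2N-1}] in [tstarx n ks x]. *)
Fixpoint tstarx_coef (n : nat) (ks : list nat) (N : nat) : R :=
  match ks with
  | nil => delta n N
  | k :: ks' => sum_n_m (fun j => oddinv j k * tstarx_coef j ks' N) 1 n
  end.

(* Coefficients of the right-hand side of the theorem, for the word [L]. *)
Definition closed_form (n : nat) (L : list nat) (N : nat) : R :=
  sum_n_m (fun j => (-1) ^ (j - 1) * tstar n (firstn (j - 1) L)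
                      * ti_coef (rev (skipn (j - 1) L)) N) 1 (length L)
  + (-1) ^ (length L) * tstarx_coef n L N.

Lemma subexp_delta n : subexp (delta n).
Proof.
  apply subexp_bounded. intros N. unfold delta.
  destruct (Nat.eqb N n); rewrite ?Rabs_R1, ?Rabs_R0; lra.
Qed.

(* The recursion behind [tstrict]: prepending an index is a block operator. *)
Lemma blockop_ti_coef m R N : R <> [] -> blockop m (ti_coef R) N = ti_coef (m :: R) N.
Proof. intros HR. destruct R as [|k ks]; [congruence | reflexivity]. Qed.

Lemma subexp_ti_coef R : subexp (ti_coef R).
Proof.
  induction R as [|k [|k' R] IH].
  - apply subexp_zero.
  - apply subexp_bounded. intros N. simpl. rewrite Rmult_1_r. apply oddinv_le1.
  - eapply subexp_ext1; [|apply (subexp_blockop k _ IH)].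
    intros N _. apply blockop_ti_coef. congruence.
Qed.

Lemma subexp_tstarx_coef L n : subexp (tstarx_coef n L).
Proof.
  revert n; induction L as [|k L IH]; intros n; simpl; [apply subexp_delta|].
  apply (subexp_sum (fun j N => oddinv j k * tstarx_coef j L N)).
  intros j. apply subexp_scal, IH.
Qed.

Lemma sum_delta n M : (1 <= n)%nat -> sum_n_m (delta n) 1 M = if Nat.leb n M then 1 else 0.
Proof.
  intros Hn. induction M as [|M IH].
  - rewrite sum_1_0. destruct (Nat.leb_spec n 0); [lia | reflexivity].
  - rewrite sum_1_S, IH. unfold delta.
    destruct (Nat.leb_spec n M), (Nat.eqb_spec (S M) n), (Nat.leb_spec n (S M));
      simpl; try lia; ring.
Qed.

Lemma sum_oddinv_delta m n N :
  sum_n_m (fun j => oddinv j m * delta j N) 1 n =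
  if (Nat.leb 1 N && Nat.leb N n)%bool then oddinv N m else 0.
Proof.
  induction n as [|n IH].
  - rewrite sum_1_0. destruct (Nat.leb_spec 1 N), (Nat.leb_spec N 0); simpl; try lia; reflexivity.
  - rewrite sum_1_S, IH. unfold delta.
    destruct (Nat.leb_spec 1 N), (Nat.leb_spec N n), (Nat.eqb_spec N (S n)),
      (Nat.leb_spec N (S n)); simpl; try lia; try ring. subst. ring.
Qed.

Lemma sum_affine (u v w : nat -> R) t b :
  sum_n_m (fun j => u j * (v j * t - w j)) 1 b
  = sum_n_m (fun j => u j * v j) 1 b * t - sum_n_m (fun j => u j * w j) 1 b.
Proof.
  induction b as [|b IH]; [rewrite !sum_1_0; simpl; ring|].
  rewrite !sum_1_S, IH. simpl. ring.
Qed.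

(* Partial summation step:
   [T_m (tstarx_coef n ks) = tstar n ks * ti_coef [m] - tstarx_coef n (ks ++ [m])]. *)
Lemma blockop_tstarx_coef ks n m N : (1 <= n)%nat -> (1 <= N)%nat ->
  blockop m (tstarx_coef n ks) N = tstar n ks * ti_coef [m] N - tstarx_coef n (ks ++ [m]) N.
Proof.
  revert n. induction ks as [|k ks IH]; intros n Hn HN.
  - simpl. unfold blockop, psum. rewrite sum_delta, sum_oddinv_delta by exact Hn.
    destruct (Nat.leb_spec n (N - 1)), (Nat.leb_spec 1 N), (Nat.leb_spec N n);
      simpl; try lia; ring.
  - transitivity (sum_n_m (fun j => oddinv j k * blockop m (tstarx_coef j ks) N) 1 n).
    { simpl. unfold blockop at 1. rewrite psum_sum, <- (sum_n_m_mult_l (K := R_Ring)).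
      apply sum_n_m_ext. intros j. rewrite psum_scal. unfold blockop, mult. simpl. ring. }
    rewrite (sum_n_m_ext_loc _
      (fun j => oddinv j k * (tstar j ks * ti_coef [m] N - tstarx_coef j (ks ++ [m]) N))).
    + rewrite sum_affine. reflexivity.
    + intros j Hj. rewrite IH by lia. reflexivity.
Qed.

Lemma blockop_closed_form m n L N :
  blockop m (closed_form n L) N =
  sum_n_m (fun j => (-1) ^ (j - 1) * tstar n (firstn (j - 1) L)
                      * blockop m (ti_coef (rev (skipn (j - 1) L))) N) 1 (length L)
  + (-1) ^ (length L) * blockop m (tstarx_coef n L) N.
Proof.
  unfold closed_form, blockop at 1. rewrite psum_plus.
  rewrite (psum_sum (fun j i => (-1) ^ (j - 1) * tstar n (firstn (j - 1) L)
                                  * ti_coef (rev (skipn (j - 1) L)) i)).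
  rewrite psum_scal, Rmult_plus_distr_l. f_equal.
  - rewrite <- (sum_n_m_mult_l (K := R_Ring)). apply sum_n_m_ext. intros j.
    rewrite psum_scal. unfold blockop, mult. simpl. ring.
  - unfold blockop. ring.
Qed.

Lemma closed_form_snoc n L m N :
  closed_form n (L ++ [m]) N =
  sum_n_m (fun j => (-1) ^ (j - 1) * tstar n (firstn (j - 1) L)
                      * ti_coef (m :: rev (skipn (j - 1) L)) N) 1 (length L)
  + (-1) ^ (length L) * (tstar n L * ti_coef [m] N - tstarx_coef n (L ++ [m]) N).
Proof.
  unfold closed_form. rewrite length_app, Nat.add_1_r, sum_1_S.
  replace (S (length L) - 1)%nat with (length L) by lia.
  rewrite firstn_app, skipn_app, Nat.sub_diag, firstn_all, skipn_all.
  cbn [firstn skipn rev app pow]. rewrite app_nil_r.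
  rewrite (sum_n_m_ext_loc _
    (fun j => (-1) ^ (j - 1) * tstar n (firstn (j - 1) L)
                * ti_coef (m :: rev (skipn (j - 1) L)) N)).
  - ring.
  - intros j Hj. rewrite firstn_app, skipn_app.
    replace (j - 1 - length L)%nat with 0%nat by lia.
    cbn [firstn skipn]. rewrite app_nil_r, rev_app_distr. reflexivity.
Qed.

Lemma blockops_delta n L N : (1 <= n)%nat -> (1 <= N)%nat ->
  blockops L (delta n) N = closed_form n L N.
Proof.
  intros Hn. revert N. induction L as [|m L IH] using rev_ind; intros N HN.
  - unfold closed_form. simpl. rewrite sum_1_0. ring.
  - rewrite blockops_snoc, closed_form_snoc.
    unfold blockop at 1. rewrite (psum_ext1 _ (closed_form n L)) by (intros i Hi; apply IH, Hi).
    fold (blockop m (closed_form n L) N).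
    rewrite blockop_closed_form, blockop_tstarx_coef by assumption. f_equal.
    apply sum_n_m_ext_loc. intros j Hj. rewrite blockop_ti_coef; [reflexivity|].
    intros E. apply (f_equal (@length nat)) in E.
    rewrite length_rev, length_skipn in E. simpl in E. lia.
Qed.

(** * Identification of the series *)

Lemma oddser_delta n x : (1 <= n)%nat -> Rabs x < 1 -> oddser (delta n) x = x ^ (2 * n - 1).
Proof.
  intros Hn Hx. unfold oddser.
  set (e0 := fun k : nat => match k with O => 1 | S _ => 0 end).
  assert (He0 : PSeries e0 (x ^ 2) = 1).
  { rewrite PSeries_decr_1.
    - rewrite (PSeries_ext _ (fun _ => 0)) by reflexivity. rewrite PSeries_const_0. simpl. ring.
    - apply CV_radius_inside, radius_subexp; [|apply Rabs_sqr_lt1, Hx].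
      apply subexp_bounded. intros [|k]; simpl; rewrite ?Rabs_R1, ?Rabs_R0; lra. }
  destruct n as [|n]; [lia|].
  rewrite (PSeries_ext _ (PS_incr_n e0 n)).
  - rewrite PSeries_incr_n, He0. replace (2 * S n - 1)%nat with (S (2 * n)) by lia.
    rewrite <- pow_mult. simpl. ring.
  - assert (Hincr : forall j k, PS_incr_n e0 j k = if Nat.eqb k j then 1 else 0).
    { induction j as [|j IH]; intros [|k]; simpl; auto. }
    intros k. unfold shift, delta. rewrite Hincr. reflexivity.
Qed.

Lemma ti_oddser k ks x : Rabs x < 1 -> ti (k :: ks) x = oddser (ti_coef (k :: ks)) x.
Proof.
  intros Hx. unfold ti, oddser.
  set (a := fun i => x * (shift (ti_coef (k :: ks)) i * (x ^ 2) ^ i)).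
  assert (Hterm : forall i : nat,
             x ^ (2 * S i - 1) * oddinv (S i) k * tstrict (S i - 1) ks = a i).
  { intros i. unfold a, shift, ti_coef. replace (2 * S i - 1)%nat with (S (2 * i)) by lia.
    rewrite <- pow_mult. simpl. ring. }
  assert (Hex : ex_series a).
  { apply (ex_series_scal_l x (fun i => shift (ti_coef (k :: ks)) i * (x ^ 2) ^ i)).
    eapply ex_series_ext; [|exact (ex_pseries_shift _ x (subexp_ti_coef (k :: ks)) Hx)].
    intros i. simpl. rewrite pow_n_pow. unfold scal; simpl. unfold mult; simpl. ring. }
  rewrite Series_incr_1.
  - rewrite (Series_ext _ a) by exact Hterm. unfold a. rewrite Series_scal_l. unfold PSeries. ring.
  - apply ex_series_incr_1. eapply ex_series_ext; [|exact Hex]. intros i. symmetry. apply Hterm.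
Qed.

Lemma tstarx_oddser L n x : L <> [] -> Rabs x < 1 -> tstarx n L x = oddser (tstarx_coef n L) x.
Proof.
  revert n. induction L as [|k L IH]; intros n HL Hx; [congruence|].
  cbn [tstarx tstarx_coef].
  rewrite (oddser_sum (fun j N => oddinv j k * tstarx_coef j L N))
    by (try intros j; try apply subexp_scal, subexp_tstarx_coef; assumption).
  apply sum_n_m_ext_loc. intros j Hj. rewrite oddser_scal. f_equal.
  destruct L as [|k' L].
  - symmetry. apply oddser_delta; [lia | assumption].
  - apply IH; [congruence | assumption].
Qed.

Lemma oddser_closed_form n L x : L <> [] -> Rabs x < 1 ->
  oddser (closed_form n L) x =
  sum_n_m (fun j => (-1) ^ (j - 1) * tstar n (firstn (j - 1) L)
                      * ti (rev (skipn (j - 1) L)) x) 1 (length L)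
  + (-1) ^ (length L) * tstarx n L x.
Proof.
  intros HL Hx. set (A := fun j => (-1) ^ (j - 1) * tstar n (firstn (j - 1) L)).
  set (g := fun j N => A j * ti_coef (rev (skipn (j - 1) L)) N).
  assert (Gg : forall j, subexp (g j)) by (intros j; apply subexp_scal, subexp_ti_coef).
  unfold closed_form. fold A.
  rewrite (oddser_plus (fun N => sum_n_m (fun j => g j N) 1 (length L)))
    by (try apply subexp_sum; try apply subexp_scal, subexp_tstarx_coef; assumption).
  rewrite oddser_sum, oddser_scal, <- tstarx_oddser by assumption. f_equal.
  apply sum_n_m_ext_loc. intros j Hj. unfold g. rewrite oddser_scal. f_equal.
  destruct (rev (skipn (j - 1) L)) as [|k R] eqn:E.
  - apply (f_equal (@length nat)) in E.
    rewrite length_rev, length_skipn in E. simpl in E. lia.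
  - symmetry. apply ti_oddser, Hx.
Qed.

Lemma RInt_monomial k y : RInt (fun t => t ^ k * 1) 0 y = y ^ (S k) / INR (S k).
Proof.
  apply is_RInt_unique.
  replace (y ^ S k / INR (S k)) with
    (minus ((fun t => t ^ S k / INR (S k)) y) ((fun t => t ^ S k / INR (S k)) 0))
    by (cbv beta; change (minus ?a ?b) with (a - b); rewrite pow_i by lia;
        unfold Rdiv; rewrite Rmult_0_l; apply Rminus_0_r).
  apply (is_RInt_derive (fun t => t ^ S k / INR (S k))).
  - intros t _. auto_derive; [auto|].
    change (match k with 0%nat => 1 | S _ => INR k + 1 end) with (INR (S k)).
    field. apply not_0_INR. lia.
  - intros t _. apply continuity_pt_filterlim, derivable_continuous_pt.
    apply derivable_pt_mult; [apply derivable_pt_pow | apply derivable_pt_const].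
Qed.

Lemma itint_monomial_blocks n L x : (1 <= n)%nat ->
  List.Forall (fun k => (1 <= k)%nat) L -> Rabs x < 1 ->
  INR (2 * n - 1) * itint ((fun t => t ^ (2 * n - 2)) :: flat_map block L) x
  = oddser (blockops L (delta n)) x.
Proof.
  intros Hn HL Hx. assert (Hn1 : INR (2 * n - 1) <> 0) by (apply not_0_INR; lia).
  unfold itint. cbn [rev]. rewrite itint_aux_with, itint_with_app.
  rewrite (itint_with_ext _ _ (oddser (fun N => / INR (2 * n - 1) * delta n N))) by
    (try assumption; intros y Hy; cbn [itint_with]; rewrite RInt_monomial, oddser_scal,
       oddser_delta by assumption; replace (S (2 * n - 2)) with (2 * n - 1)%nat by lia;
     unfold Rdiv; ring).
  rewrite itint_blocks by (try apply subexp_scal, subexp_delta; assumption).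
  rewrite (oddser_ext _ (fun N => / INR (2 * n - 1) * blockops L (delta n) N))
    by (intros N HN; apply blockops_scal, HN).
  rewrite oddser_scal. field. exact Hn1.
Qed.

(* The inner part [t^{2n-1} dt dt/(1-t^2)] of the first word equals
   [int_0^y t dt/(1-t^2) oddser (delta n / 2n)], the start of a block. *)
Lemma RInt_om_1_monomial n y : (1 <= n)%nat -> Rabs y < 1 ->
  RInt (fun t => om_1 t * RInt (fun s => s ^ (2 * n - 1) * 1) 0 t) 0 y
  = RInt (fun t => om_tt t * oddser (fun N => / INR (2 * n) * delta n N) t) 0 y.
Proof.
  intros Hn Hy. apply RInt_ext. intros t Ht.
  match goal with |- ?a = ?b => change (@eq R a b) end.
  assert (Ht1 := Rabs_between_lt1 y t Hy ltac:(lra)).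
  rewrite RInt_monomial, oddser_scal, oddser_delta by assumption.
  replace (S (2 * n - 1)) with (2 * n)%nat by lia.
  replace (2 * n)%nat with (S (2 * n - 1)) at 1 by lia.
  unfold om_1, om_tt. change (t ^ S (2 * n - 1)) with (t * t ^ (2 * n - 1)).
  field. split; [apply not_0_INR; lia | apply one_minus_sqr_neq0, Ht1].
Qed.

Lemma itint_monomial_om_1_blocks n m1 ms x : (1 <= n)%nat -> (1 <= m1)%nat ->
  List.Forall (fun k => (1 <= k)%nat) ms -> Rabs x < 1 ->
  INR (2 * n) * itint ((fun t => t ^ (2 * n - 1)) :: om_1 :: repeat om_t (m1 - 1)
                         ++ flat_map block ms) x
  = oddser (blockops (m1 :: ms) (delta n)) x.
Proof.
  intros Hn Hm1 Hms Hx. assert (Hn2 : INR (2 * n) <> 0) by (apply not_0_INR; lia).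
  set (c1 := fun N => / INR (2 * n) * delta n N).
  assert (Gc1 : subexp c1) by apply subexp_scal, subexp_delta.
  unfold itint. cbn [rev]. rewrite rev_app_distr, rev_repeat, <- !app_assoc.
  rewrite itint_aux_with, itint_with_app.
  rewrite (itint_with_ext _ _ (oddser (blockop m1 c1))); try assumption.
  - rewrite itint_blocks by (try apply subexp_blockop; assumption).
    change (blockops ms (blockop m1 c1)) with (blockops (m1 :: ms) c1).
    rewrite (oddser_ext _ (fun N => / INR (2 * n) * blockops (m1 :: ms) (delta n) N))
      by (intros N HN; apply blockops_scal, HN).
    rewrite oddser_scal. field. exact Hn2.
  - intros y Hy. rewrite itint_with_app. apply itint_block_tail; try assumption.
    intros z Hz. cbn [itint_with app]. rewrite RInt_om_1_monomial by assumption.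
    apply RInt_om_tt; assumption.
Qed.

Theorem mainTheorem7 (m1 : nat) (ms : list nat) (n : nat) (x : R)
  (hm : List.Forall (fun k => (1 <= k)%nat) (m1 :: ms))
  (hn : (1 <= n)%nat)
  (hx : Rabs x < 1) :
  let m := m1 :: ms in
  let p := length m in
  INR (2 * n) *
    itint ((fun t => t ^ (2 * n - 1)) :: om_1 :: repeat om_t (m1 - 1)
             ++ flat_map block ms) x
  = INR (2 * n - 1) *
    itint ((fun t => t ^ (2 * n - 2)) :: flat_map block m) x
  /\
  INR (2 * n - 1) *
    itint ((fun t => t ^ (2 * n - 2)) :: flat_map block m) x
  = sum_n_m (fun j => (-1) ^ (j - 1) * tstar n (firstn (j - 1) m)
                        * ti (rev (skipn (j - 1) m)) x) 1 p
    + (-1) ^ p * tstarx n m x.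
Proof.
  cbv zeta. inversion hm as [|? ? hm1 hms]; subst.
  rewrite itint_monomial_om_1_blocks, itint_monomial_blocks by assumption.
  split; [reflexivity|].
  rewrite <- oddser_closed_form by (try discriminate; assumption).
  apply oddser_ext. intros N HN. apply blockops_delta; assumption.
Qed.
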